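(* Fix $n\ge1$, pairwise distinct constants $\lambda_1,\dots,\lambda_n$ and arbitrary constants $\alpha_1,\dots,\alpha_n$. Consider the system \[ y_{j,xx}=\frac{y_{j,x}^2-\alpha_j^2}{2y_j}+2(u-\lambda_j)y_j,\qquad (\mathrm{A}) \] \[ y_{j,t}=2u_xy_j-2(u+2\lambda_j)y_{j,x},\qquad (\mathrm{B}) \] $j=1,\dots,n$, where $u:=\frac{x}{6t}+\frac{1}{3t}(y_1+\dots+y_n)$ ($t\neq0$). Regard (A) as expressing $y_{j,xx}$ as a function of $x,t,y_1,y_{1,x},\dots,y_n,y_{n,x}$, and (B) as expressing $y_{j,t}$ in these variables, the $t$-derivative of $y_{j,x}$ being obtained by differentiating (B) with respect to $x$ and eliminating second $x$-derivatives by (A). Then the system is consistent: $(y_{j,xx})_t=(y_{j,t})_{xx}$ holds identically in $x,t,y_k,y_{k,x}$ when both sides are computed by virtue of (A), (B). Moreover, by virtue of (A), (B), the function $u$ satisfies the KdV equation $u_t=u_{xxx}-6uu_x$.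
   Context: All $y_j$ are assumed nonzero where the equations are considered. Subscripts $x,t$ denote partial derivatives. *)

From Stdlib Require Import Reals.
From Coquelicot Require Import Coquelicot.
Open Scope R_scope.

Fixpoint rsum (n : nat) (f : nat -> R) : R :=
  match n with O => 0 | S m => rsum m f + f m end.

(* A function on the jet space with coordinates
   x, t, y = (y_0, y_1, ...), p = (p_0, p_1, ...)  where p_k stands for y_{k,x}.
   Only indices k < n are relevant. *)
Definition jet := R -> R -> (nat -> R) -> (nat -> R) -> R.

Definition upd (y : nat -> R) (k : nat) (s : R) : nat -> R :=
  fun i => if Nat.eqb i k then s else y i.

Definition d_x (f : jet) : jet := fun x t y p => Derive (fun s => f s t y p) x.
Definition d_t (f : jet) : jet := fun x t y p => Derive (fun s => f x s y p) t.
Definition d_y (k : nat) (f : jet) : jet :=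
  fun x t y p => Derive (fun s => f x t (upd y k s) p) (y k).
Definition d_p (k : nat) (f : jet) : jet :=
  fun x t y p => Derive (fun s => f x t y (upd p k s)) (p k).

(* total x-derivative by virtue of  y_{k,x} = p_k,  p_{k,x} = Fxx k *)
Definition TDx (n : nat) (Fxx : nat -> jet) (f : jet) : jet :=
  fun x t y p =>
    d_x f x t y p
    + rsum n (fun k => p k * d_y k f x t y p)
    + rsum n (fun k => Fxx k x t y p * d_p k f x t y p).

(* total t-derivative by virtue of  y_{k,t} = Gt k,  p_{k,t} = Ht k *)
Definition TDt (n : nat) (Gt Ht : nat -> jet) (f : jet) : jet :=
  fun x t y p =>
    d_t f x t y p
    + rsum n (fun k => Gt k x t y p * d_y k f x t y p)
    + rsum n (fun k => Ht k x t y p * d_p k f x t y p).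

Definition u_fn (n : nat) : jet :=
  fun x t y p => x / (6 * t) + / (3 * t) * rsum n y.

Definition FA (n : nat) (lam alp : nat -> R) (j : nat) : jet :=
  fun x t y p =>
    (p j ^ 2 - alp j ^ 2) / (2 * y j) + 2 * (u_fn n x t y p - lam j) * y j.

Definition ux_fn (n : nat) (lam alp : nat -> R) : jet :=
  TDx n (FA n lam alp) (u_fn n).

Definition GB (n : nat) (lam alp : nat -> R) (j : nat) : jet :=
  fun x t y p =>
    2 * ux_fn n lam alp x t y p * y j
    - 2 * (u_fn n x t y p + 2 * lam j) * p j.

(* y_{j,xt}: x-derivative of (B), eliminating second x-derivatives by (A) *)
Definition HB (n : nat) (lam alp : nat -> R) (j : nat) : jet :=
  TDx n (FA n lam alp) (GB n lam alp j).

Definition TotDx (n : nat) (lam alp : nat -> R) : jet -> jet := TDx n (FA n lam alp).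
Definition TotDt (n : nat) (lam alp : nat -> R) : jet -> jet :=
  TDt n (GB n lam alp) (HB n lam alp).

From Stdlib Require Import Reals Lra Lia.
From Coquelicot Require Import Coquelicot.
Open Scope R_scope.

(* Every function on the jet space that occurs in the proof is
   "reduced": it depends on (y, p) only through one distinguished pair
   (y_j, p_j) and the four symmetric sums
     S = sum y_k,  P = sum p_k,  A = sum (p_k^2 - alp_k^2)/(2 y_k),  L = sum lam_k y_k,
   i.e. it has the form  Phi(x, t, y_j, p_j, S, P, A, L).  For such functions the
   total x-derivative collapses, by the chain rule, to a closed formula in the
   partial derivatives of Phi (lemma [TDx_reduced]); the key simplification is
   that by (A) the sum A has total x-derivative  2uP - 2 sum lam_k p_k.  Applying these to the explicit
   profiles of u, u_x, u_xx, y_{j,xx}, y_{j,t}, y_{j,xt} gives closed forms for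
   u_t, u_xxx, (y_{j,xx})_t and (y_{j,t})_xx on the admissible domain
   t <> 0, y_k <> 0 (where the derivatives of the nested total derivatives are
   legitimate by locality, [TDx_local]); both identities of the theorem then
   reduce to rational identities checked by [field]. *)

Lemma rsum_ext n f g : (forall k, (k < n)%nat -> f k = g k) -> rsum n f = rsum n g.
Proof.
  induction n as [|n IH]; simpl; intros H; [reflexivity|].
  rewrite IH by (intros; apply H; lia). rewrite H by lia. reflexivity.
Qed.

Lemma rsum_plus n f g : rsum n (fun k => f k + g k) = rsum n f + rsum n g.
Proof. induction n as [|n IH]; simpl; [ring|]. rewrite IH. ring. Qed.

Lemma rsum_scal n c f : rsum n (fun k => c * f k) = c * rsum n f.
Proof. induction n as [|n IH]; simpl; [ring|]. rewrite IH. ring. Qed.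

Lemma rsum_delta n j c : (j < n)%nat -> rsum n (fun k => if Nat.eqb j k then c else 0) = c.
Proof.
  induction n as [|n IH]; intros Hj; [lia|]. simpl.
  destruct (Nat.eqb_spec j n) as [<-|Hne].
  - rewrite (rsum_ext _ _ (fun k => 0 * 1)), rsum_scal; [ring|].
    intros k Hk. destruct (Nat.eqb_spec j k); [lia|ring].
  - rewrite IH by lia. ring.
Qed.

Lemma rsum_upd n (g : nat -> R -> R) v k s : (k < n)%nat ->
  rsum n (fun m => g m (upd v k s m)) = rsum n (fun m => g m (v m)) + (g k s - g k (v k)).
Proof.
  induction n as [|n IH]; intros Hk; [lia|]. simpl. unfold upd at 2.
  destruct (Nat.eqb_spec k n) as [<-|Hne].
  - rewrite Nat.eqb_refl, (rsum_ext _ _ (fun m => g m (v m))); [ring|].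
    intros m Hm. unfold upd. destruct (Nat.eqb_spec m k); [lia|reflexivity].
  - rewrite IH by lia. destruct (Nat.eqb_spec n k); [lia|ring].
Qed.

Lemma rsum_upd_id n v k s : (k < n)%nat -> rsum n (upd v k s) = rsum n v + (s - v k).
Proof. exact (rsum_upd n (fun _ w => w) v k s). Qed.

Lemma locally_neq0 a : a <> 0 -> locally a (fun s => s <> 0).
Proof.
  intros Ha. exists (mkposreal (Rabs a) (Rabs_pos_lt a Ha)). intros s Hs ->.
  change (Rabs (0 - a) < Rabs a) in Hs. rewrite Rminus_0_l, Rabs_Ropp in Hs. lra.
Qed.

Section JetCalculus.

Variables (n : nat) (lam alp : nat -> R).

Definition Asum (y p : nat -> R) : R := rsum n (fun k => (p k ^ 2 - alp k ^ 2) / (2 * y k)).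
Definition Lsum (v : nat -> R) : R := rsum n (fun k => lam k * v k).

Definition reduced (Phi : R -> R -> R -> R -> R -> R -> R -> R -> R) (j : nat) : jet :=
  fun x t y p => Phi x t (y j) (p j) (rsum n y) (rsum n p) (Asum y p) (Lsum y).

Lemma d_y_reduced Phi j k x t y p : (k < n)%nat ->
  d_y k (reduced Phi j) x t y p =
  Derive (fun s => Phi x t (if Nat.eqb j k then s else y j) (p j)
     (rsum n y + (s - y k)) (rsum n p)
     (Asum y p + ((p k ^ 2 - alp k ^ 2) / (2 * s) - (p k ^ 2 - alp k ^ 2) / (2 * y k)))
     (Lsum y + (lam k * s - lam k * y k))) (y k).
Proof.
  intros Hk. unfold d_y, reduced, Asum, Lsum. apply Derive_ext. intros s.
  rewrite (rsum_upd_id n y k s Hk),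
    (rsum_upd n (fun m v => (p m ^ 2 - alp m ^ 2) / (2 * v)) y k s Hk),
    (rsum_upd n (fun m v => lam m * v) y k s Hk).
  unfold upd at 1. reflexivity.
Qed.

Lemma d_p_reduced Phi j k x t y p : (k < n)%nat ->
  d_p k (reduced Phi j) x t y p =
  Derive (fun s => Phi x t (y j) (if Nat.eqb j k then s else p j)
     (rsum n y) (rsum n p + (s - p k))
     (Asum y p + ((s ^ 2 - alp k ^ 2) / (2 * y k) - (p k ^ 2 - alp k ^ 2) / (2 * y k)))
     (Lsum y)) (p k).
Proof.
  intros Hk. unfold d_p, reduced, Asum. apply Derive_ext. intros s.
  rewrite (rsum_upd_id n p k s Hk),
    (rsum_upd n (fun m v => (v ^ 2 - alp m ^ 2) / (2 * y m)) p k s Hk).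
  unfold upd at 1. reflexivity.
Qed.

Lemma sum_FA x t y p :
  rsum n (fun k => FA n lam alp k x t y p)
  = Asum y p + 2 * u_fn n x t y p * rsum n y - 2 * Lsum y.
Proof.
  unfold Asum, Lsum.
  rewrite (rsum_ext _ _ (fun k => (p k ^ 2 - alp k ^ 2) / (2 * y k)
     + (2 * u_fn n x t y p) * y k + (-2) * (lam k * y k))).
  - rewrite !rsum_plus, !rsum_scal. ring.
  - intros k _. unfold FA. ring.
Qed.

Lemma sum_GB x t y p :
  rsum n (fun k => GB n lam alp k x t y p)
  = 2 * ux_fn n lam alp x t y p * rsum n y - 2 * u_fn n x t y p * rsum n p - 4 * Lsum p.
Proof.
  unfold Lsum.
  rewrite (rsum_ext _ _ (fun k => (2 * ux_fn n lam alp x t y p) * y k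
     + (-2 * u_fn n x t y p) * p k + (-4) * (lam k * p k))).
  - rewrite !rsum_plus, !rsum_scal. ring.
  - intros k _. unfold GB. ring.
Qed.

(* Along (A) the sum A
   has x-derivative 2uP - 2 sum lam_k p_k. *)
Lemma TDx_reduced (F : jet) j x t y p Fy Fp FS FP FAs FL :
  (j < n)%nat -> (forall k, (k < n)%nat -> y k <> 0) ->
  (forall k, (k < n)%nat -> d_y k F x t y p = (if Nat.eqb j k then Fy else 0)
     + FS + FAs * (- (p k ^ 2 - alp k ^ 2) / (2 * y k ^ 2)) + FL * lam k) ->
  (forall k, (k < n)%nat -> d_p k F x t y p = (if Nat.eqb j k then Fp else 0)
     + FP + FAs * (p k / y k)) ->
  TDx n (FA n lam alp) F x t y p
  = d_x F x t y p + p j * Fy + FA n lam alp j x t y p * Fp + FS * rsum n p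
    + FP * (Asum y p + 2 * u_fn n x t y p * rsum n y - 2 * Lsum y)
    + FAs * (2 * u_fn n x t y p * rsum n p - 2 * Lsum p) + FL * Lsum p.
Proof.
  intros Hj Hy Hdy Hdp. unfold TDx, Lsum.
  rewrite (rsum_ext _ _ _ (fun k Hk => f_equal (fun z => p k * z) (Hdy k Hk))),
    (rsum_ext _ _ _ (fun k Hk => f_equal (fun z => FA n lam alp k x t y p * z) (Hdp k Hk))),
    Rplus_assoc, <- rsum_plus.
  rewrite (rsum_ext _ _ (fun k =>
       (if Nat.eqb j k then p j * Fy + FA n lam alp j x t y p * Fp else 0)
     + FS * p k + FP * FA n lam alp k x t y p
     + (2 * FAs * u_fn n x t y p) * p k + (FL - 2 * FAs) * (lam k * p k))).
  - rewrite !rsum_plus, rsum_delta, !rsum_scal, sum_FA by exact Hj.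
    unfold Lsum. ring.
  - intros k Hk. specialize (Hy k Hk).
    destruct (Nat.eqb_spec j k) as [<-|]; unfold FA; field; exact Hy.
Qed.

Lemma TDt_reduced Gt Ht (F : jet) j x t y p Fy Fp FS :
  (j < n)%nat ->
  (forall k, (k < n)%nat -> d_y k F x t y p = (if Nat.eqb j k then Fy else 0) + FS) ->
  (forall k, (k < n)%nat -> d_p k F x t y p = (if Nat.eqb j k then Fp else 0)) ->
  TDt n Gt Ht F x t y p
  = d_t F x t y p + Gt j x t y p * Fy + FS * rsum n (fun k => Gt k x t y p)
    + Ht j x t y p * Fp.
Proof.
  intros Hj Hdy Hdp. unfold TDt.
  rewrite (rsum_ext n (fun k => Gt k x t y p * d_y k F x t y p)
       (fun k => (if Nat.eqb j k then Gt j x t y p * Fy else 0) + FS * Gt k x t y p)),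
    (rsum_ext n (fun k => Ht k x t y p * d_p k F x t y p)
       (fun k => if Nat.eqb j k then Ht j x t y p * Fp else 0)).
  - rewrite rsum_plus, !rsum_delta, rsum_scal by exact Hj. ring.
  - intros k Hk. rewrite Hdp by exact Hk. destruct (Nat.eqb_spec j k) as [<-|]; ring.
  - intros k Hk. rewrite Hdy by exact Hk. destruct (Nat.eqb_spec j k) as [<-|]; ring.
Qed.

Definition admissible (t : R) (y : nat -> R) : Prop :=
  t <> 0 /\ forall k, (k < n)%nat -> y k <> 0.

(* Total x-derivatives are local: they only depend on the function on the
   (open) admissible domain.  This lets us replace a nested total derivative
   by its closed form before differentiating again. *)
Lemma TDx_local Fxx (f g : jet) x t y p :
  (forall x t y p, admissible t y -> f x t y p = g x t y p) -> admissible t y ->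
  TDx n Fxx f x t y p = TDx n Fxx g x t y p.
Proof.
  intros Hfg Hadm. unfold TDx, d_x, d_y, d_p.
  rewrite (Derive_ext _ (fun s => g s t y p)) by (intros; exact (Hfg _ _ _ _ Hadm)).
  f_equal; [f_equal|]; apply rsum_ext; intros k Hk; f_equal.
  - apply Derive_ext_loc.
    apply (filter_imp (fun s => s <> 0)); [|apply locally_neq0, Hadm, Hk].
    intros s Hs. apply Hfg. split; [apply Hadm|].
    intros i Hi. unfold upd. destruct (Nat.eqb_spec i k) as [->|]; [exact Hs|apply Hadm, Hi].
  - apply Derive_ext. intros s. exact (Hfg _ _ _ _ Hadm).
Qed.


Definition U (x t S : R) : R := x / (6 * t) + / (3 * t) * S.
Definition prof_u (x t yj pj S P A L : R) : R := U x t S.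
Definition prof_ux (x t yj pj S P A L : R) : R := / (6 * t) + / (3 * t) * P.
Definition prof_uxx (x t yj pj S P A L : R) : R := / (3 * t) * (A + 2 * U x t S * S - 2 * L).
Definition prof_FA (j : nat) (x t yj pj S P A L : R) : R :=
  (pj ^ 2 - alp j ^ 2) / (2 * yj) + 2 * (U x t S - lam j) * yj.
Definition prof_GB (j : nat) (x t yj pj S P A L : R) : R :=
  2 * prof_ux x t yj pj S P A L * yj - 2 * (U x t S + 2 * lam j) * pj.
Definition prof_HB (j : nat) (x t yj pj S P A L : R) : R :=
  2 * yj * prof_uxx x t yj pj S P A L - 2 * (U x t S + 2 * lam j) * prof_FA j x t yj pj S P A L.

Lemma u_reduced : u_fn n = reduced prof_u 0.
Proof. reflexivity. Qed.

Lemma FA_reduced j : FA n lam alp j = reduced (prof_FA j) j.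
Proof. reflexivity. Qed.

Ltac nonzero := repeat apply Rmult_integral_contrapositive_currified;
  try assumption; try lra; try (apply pow_nonzero; assumption).
Ltac close_derivative := first [ solve [field; repeat split; nonzero] | solve [repeat split; nonzero] ].
Ltac unfold_profiles :=
  cbv beta iota delta [prof_u prof_ux prof_uxx prof_FA prof_GB prof_HB U].

Ltac reduced_partials j Hy :=
  intros k Hk; pose proof (Hy k Hk);
  first [ rewrite d_y_reduced by exact Hk | rewrite d_p_reduced by exact Hk ];
  destruct (Nat.eqb_spec j k) as [<-|]; apply is_derive_unique;
  unfold_profiles; auto_derive; close_derivative.

Ltac direct_derivative :=
  unfold d_x, d_t, reduced; apply is_derive_unique; unfold_profiles; auto_derive; close_derivative.

Hypothesis n_pos : (0 < n)%nat.

Lemma ux_value x t y p : admissible t y ->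
  ux_fn n lam alp x t y p = reduced prof_ux 0 x t y p.
Proof.
  intros [Ht Hy]. unfold ux_fn. rewrite u_reduced.
  rewrite (TDx_reduced _ 0 x t y p 0 0 (/ (3 * t)) 0 0 0 n_pos Hy).
  - replace (d_x (reduced prof_u 0) x t y p) with (/ (6 * t)) by (symmetry; direct_derivative).
    unfold reduced, prof_ux. ring.
  - reduced_partials 0%nat Hy.
  - reduced_partials 0%nat Hy.
Qed.

Lemma uxx_value x t y p : admissible t y ->
  TotDx n lam alp (TotDx n lam alp (u_fn n)) x t y p = reduced prof_uxx 0 x t y p.
Proof.
  intros Hadm. pose proof Hadm as [Ht Hy]. unfold TotDx.
  rewrite (TDx_local _ _ (reduced prof_ux 0) _ _ _ _ (ux_value) Hadm).
  rewrite (TDx_reduced _ 0 x t y p 0 0 0 (/ (3 * t)) 0 0 n_pos Hy).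
  - replace (d_x (reduced prof_ux 0) x t y p) with 0 by (symmetry; direct_derivative).
    unfold reduced, prof_uxx, U, u_fn. field. exact Ht.
  - reduced_partials 0%nat Hy.
  - reduced_partials 0%nat Hy.
Qed.

Lemma uxxx_value x t y p : admissible t y ->
  TotDx n lam alp (TotDx n lam alp (TotDx n lam alp (u_fn n))) x t y p
  = / (3 * t) * (2 * ux_fn n lam alp x t y p * rsum n y
                 + 4 * u_fn n x t y p * rsum n p - 4 * Lsum p).
Proof.
  intros Hadm. pose proof Hadm as [Ht Hy]. unfold TotDx at 1.
  rewrite (TDx_local _ _ (reduced prof_uxx 0) _ _ _ _ uxx_value Hadm).
  rewrite (TDx_reduced _ 0 x t y p 0 0
     (/ (3 * t) * (2 * / (3 * t) * rsum n y + 2 * U x t (rsum n y))) 0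
     (/ (3 * t)) (-2 / (3 * t)) n_pos Hy).
  - replace (d_x (reduced prof_uxx 0) x t y p) with (/ (3 * t) * (2 * / (6 * t) * rsum n y))
      by (symmetry; direct_derivative).
    rewrite ux_value by exact Hadm. unfold reduced, prof_ux, U, u_fn. field. exact Ht.
  - reduced_partials 0%nat Hy.
  - reduced_partials 0%nat Hy.
Qed.

Lemma ut_value x t y p : admissible t y ->
  TotDt n lam alp (u_fn n) x t y p
  = - (x / (6 * t ^ 2)) - rsum n y / (3 * t ^ 2)
    + / (3 * t) * (2 * ux_fn n lam alp x t y p * rsum n y
                   - 2 * u_fn n x t y p * rsum n p - 4 * Lsum p).
Proof.
  intros [Ht Hy]. unfold TotDt. rewrite u_reduced.
  rewrite (TDt_reduced _ _ _ 0 x t y p 0 0 (/ (3 * t)) n_pos).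
  - replace (d_t (reduced prof_u 0) x t y p) with (- (x / (6 * t ^ 2)) - rsum n y / (3 * t ^ 2))
      by (symmetry; direct_derivative).
    rewrite sum_GB. unfold reduced, prof_u, U, u_fn. ring.
  - reduced_partials 0%nat Hy.
  - reduced_partials 0%nat Hy.
Qed.

Lemma kdv_for_u x t y p : admissible t y ->
  TotDt n lam alp (u_fn n) x t y p
  = TotDx n lam alp (TotDx n lam alp (TotDx n lam alp (u_fn n))) x t y p
    - 6 * u_fn n x t y p * TotDx n lam alp (u_fn n) x t y p.
Proof.
  intros Hadm. pose proof Hadm as [Ht _].
  rewrite ut_value, uxxx_value by exact Hadm.
  change (TotDx n lam alp (u_fn n) x t y p) with (ux_fn n lam alp x t y p).
  rewrite ux_value by exact Hadm. unfold reduced, prof_ux, u_fn. field. exact Ht.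
Qed.

Lemma GB_value j x t y p : admissible t y ->
  GB n lam alp j x t y p = reduced (prof_GB j) j x t y p.
Proof. intros Hadm. unfold GB. rewrite ux_value by exact Hadm. reflexivity. Qed.

Lemma HB_value j x t y p : (j < n)%nat -> admissible t y ->
  HB n lam alp j x t y p = reduced (prof_HB j) j x t y p.
Proof.
  intros Hj Hadm. pose proof Hadm as [Ht Hy]. pose proof (Hy j Hj). unfold HB.
  rewrite (TDx_local _ _ (reduced (prof_GB j) j) _ _ _ _ (GB_value j) Hadm).
  rewrite (TDx_reduced _ j x t y p (2 * (/ (6 * t) + / (3 * t) * rsum n p))
     (-2 * (U x t (rsum n y) + 2 * lam j)) (-2 * / (3 * t) * p j) (2 * / (3 * t) * y j)
     0 0 Hj Hy).
  - replace (d_x (reduced (prof_GB j) j) x t y p) with (-2 * / (6 * t) * p j)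
      by (symmetry; direct_derivative).
    unfold reduced, prof_HB, prof_uxx, prof_FA, U, FA, u_fn. field. auto.
  - reduced_partials j Hy.
  - reduced_partials j Hy.
Qed.

(* (y_{j,t})_xx = 2 p_j u_xx + 2 y_j u_xxx - 2 u_x y_{j,xx} - 2 (u + 2 lam_j) y_{j,xxx},
   where y_{j,xxx} = 2 u_x y_j + 4 (u - lam_j) p_j by (A). *)
Lemma GBxx_value j x t y p : (j < n)%nat -> admissible t y ->
  TotDx n lam alp (TotDx n lam alp (GB n lam alp j)) x t y p
  = 2 * p j * TotDx n lam alp (TotDx n lam alp (u_fn n)) x t y p
    + 2 * y j * TotDx n lam alp (TotDx n lam alp (TotDx n lam alp (u_fn n))) x t y p
    - 2 * ux_fn n lam alp x t y p * FA n lam alp j x t y p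
    - 2 * (u_fn n x t y p + 2 * lam j)
        * (2 * ux_fn n lam alp x t y p * y j + 4 * (u_fn n x t y p - lam j) * p j).
Proof.
  intros Hj Hadm. pose proof Hadm as [Ht Hy]. pose proof (Hy j Hj).
  rewrite uxx_value, uxxx_value, ux_value by exact Hadm.
  change (TotDx n lam alp (TotDx n lam alp (GB n lam alp j)) x t y p)
    with (TDx n (FA n lam alp) (HB n lam alp j) x t y p).
  rewrite (TDx_local _ _ (reduced (prof_HB j) j) _ _ _ _ (fun x t y p => HB_value j x t y p Hj) Hadm).
  rewrite (TDx_reduced _ j x t y p
     (2 / (3 * t) * (Asum y p + 2 * U x t (rsum n y) * rsum n y - 2 * Lsum y)
      - 2 * (U x t (rsum n y) + 2 * lam j)
          * (- (p j ^ 2 - alp j ^ 2) / (2 * y j ^ 2) + 2 * (U x t (rsum n y) - lam j)))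
     (-2 * (U x t (rsum n y) + 2 * lam j) * (p j / y j))
     (2 * y j / (3 * t) * (2 * / (3 * t) * rsum n y + 2 * U x t (rsum n y))
      - 2 * / (3 * t) * prof_FA j x t (y j) (p j) (rsum n y) 0 0 0
      - 2 * (U x t (rsum n y) + 2 * lam j) * (2 * / (3 * t) * y j))
     0 (2 * y j / (3 * t)) (-4 * y j / (3 * t)) Hj Hy).
  - replace (d_x (reduced (prof_HB j) j) x t y p) with
      (2 * y j / (3 * t) * (2 * / (6 * t) * rsum n y)
       - 2 * / (6 * t) * prof_FA j x t (y j) (p j) (rsum n y) 0 0 0
       - 2 * (U x t (rsum n y) + 2 * lam j) * (2 * / (6 * t) * y j))
      by (symmetry; direct_derivative).
    unfold reduced, prof_ux, prof_uxx, prof_FA, U, FA, u_fn. field. auto.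
  - reduced_partials j Hy.
  - reduced_partials j Hy.
Qed.

Lemma FAt_value j x t y p : (j < n)%nat -> admissible t y ->
  TotDt n lam alp (FA n lam alp j) x t y p
  = 2 * y j * TotDt n lam alp (u_fn n) x t y p
    + GB n lam alp j x t y p
        * (- (p j ^ 2 - alp j ^ 2) / (2 * y j ^ 2) + 2 * (u_fn n x t y p - lam j))
    + HB n lam alp j x t y p * (p j / y j).
Proof.
  intros Hj Hadm. pose proof Hadm as [Ht Hy]. pose proof (Hy j Hj).
  rewrite ut_value by exact Hadm. unfold TotDt. rewrite FA_reduced.
  rewrite (TDt_reduced _ _ _ j x t y p
     (- (p j ^ 2 - alp j ^ 2) / (2 * y j ^ 2) + 2 * (U x t (rsum n y) - lam j))
     (p j / y j) (2 * / (3 * t) * y j) Hj).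
  - replace (d_t (reduced (prof_FA j) j) x t y p)
      with (2 * (- (x / (6 * t ^ 2)) - rsum n y / (3 * t ^ 2)) * y j)
      by (symmetry; direct_derivative).
    rewrite sum_GB. unfold U, u_fn. field. auto.
  - reduced_partials j Hy.
  - reduced_partials j Hy.
Qed.

Lemma consistency j x t y p : (j < n)%nat -> admissible t y ->
  TotDt n lam alp (FA n lam alp j) x t y p
  = TotDx n lam alp (TotDx n lam alp (GB n lam alp j)) x t y p.
Proof.
  intros Hj Hadm. pose proof Hadm as [Ht Hy]. pose proof (Hy j Hj).
  rewrite FAt_value, GBxx_value, ut_value, uxx_value, uxxx_value, GB_value, HB_value
    by assumption.
  rewrite ux_value by exact Hadm.
  unfold reduced, prof_HB, prof_GB, prof_uxx, prof_ux, prof_FA, U, FA, u_fn. field. auto.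
Qed.

End JetCalculus.

Theorem proposition1 (n : nat) (lam alp : nat -> R) :
  (1 <= n)%nat ->
  (forall i j : nat, (i < n)%nat -> (j < n)%nat -> i <> j -> lam i <> lam j) ->
  forall (x t : R) (y p : nat -> R),
    t <> 0 ->
    (forall k : nat, (k < n)%nat -> y k <> 0) ->
    (* consistency: (y_{j,xx})_t = (y_{j,t})_{xx} *)
    (forall j : nat, (j < n)%nat ->
       TotDt n lam alp (FA n lam alp j) x t y p
       = TotDx n lam alp (TotDx n lam alp (GB n lam alp j)) x t y p)
    /\
    (* KdV: u_t = u_xxx - 6 u u_x *)
    TotDt n lam alp (u_fn n) x t y p
    = TotDx n lam alp (TotDx n lam alp (TotDx n lam alp (u_fn n))) x t y p
      - 6 * u_fn n x t y p * TotDx n lam alp (u_fn n) x t y p.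
Proof.
  intros Hn _ x t y p Ht Hy.
  assert (Hadm : admissible n t y) by (split; assumption).
  split.
  - intros j Hj. exact (consistency n lam alp Hn j x t y p Hj Hadm).
  - exact (kdv_for_u n lam alp Hn x t y p Hadm).
Qed.
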